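(* Let $A$ be a physical system of dimension $m$ whose Hamiltonian has a non-degenerate Bohr spectrum, with energy eigenbasis $\{|x\rangle\}_{x\in[m]}$. Let $\rho=\sum_{x,x'}r_{xx'}|x\rangle\langle x'|$ and $\sigma=\sum_{x,x'}s_{xx'}|x\rangle\langle x'|$ be density matrices on $A$, and suppose $r_{xx'}\neq0$ for all $x,x'\in[m]$. Then there exists a time-translation covariant channel $\mathcal{E}:A\to A$ with $\sigma=\mathcal{E}(\rho)$ if and only if the $m\times m$ matrix $Q$ with entries $$q_{xy}=\begin{cases}\min\left\{1,\frac{s_{xx}}{r_{xx}}\right\}&\text{if }x=y,\\ \frac{s_{xy}}{r_{xy}}&\text{otherwise},\end{cases}$$ is positive semidefinite.
   Context: The Hamiltonian $H^A=\sum_x a_x|x\rangle\langle x|$ has a non-degenerate Bohr spectrum if for all $x,y,x',y'\in[m]$: $a_x-a_y=a_{x'}-a_{y'}$ holds iff ($x=x'$ and $y=y'$) or ($x=y$ and $x'=y'$). A channel $\mathcal{E}:A\to A$ is time-translation covariant if $\mathcal{E}(e^{-iH^At}\rho e^{iH^At})=e^{-iH^At}\mathcal{E}(\rho)e^{iH^At}$ for all $t\in\mathbb{R}$ and all states $\rho$. *)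

From mathcomp Require Import all_boot all_order all_algebra.
From mathcomp Require Import reals trigo.
From mathcomp.real_closed Require Import complex.
Set Implicit Arguments. Unset Strict Implicit. Unset Printing Implicit Defensive.
Import Order.TTheory GRing.Theory Num.Theory.
Local Open Scope ring_scope.
Local Open Scope complex_scope.

Section QDefs.
Variable R : realType.
Local Notation C := (R[i]).

Definition adjmx (p q : nat) (A : 'M[C]_(p, q)) : 'M[C]_(q, p) :=
  (map_mx conjc A)^T.

Definition psd (n : nat) (A : 'M[C]_n) : Prop :=
  adjmx A = A /\ forall v : 'cV[C]_n, 0 <= (adjmx v *m A *m v) 0 0.

Definition density (m : nat) (rho : 'M[C]_m) : Prop :=
  psd rho /\ \tr rho = 1.

Definition expi (theta : R) : C := cos theta +i* sin theta.

(* Hamiltonian H = sum_x a_x |x><x| in the standard (energy) basis;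
   time evolution U_t = e^{-iHt} = diag(e^{-i a_x t}) *)
Definition evol (m : nat) (a : 'I_m -> R) (t : R) : 'M[C]_m :=
  diag_mx (\row_x expi (- (a x * t))).

Definition nondeg_bohr (m : nat) (a : 'I_m -> R) : Prop :=
  forall x y x' y' : 'I_m,
    a x - a y = a x' - a y' <-> ((x = x' /\ y = y') \/ (x = y /\ x' = y')).

(* complete positivity: for every k, id_k (x) E maps positive block
   matrices (elements of M_k (x) M_m written as k x k block matrices)
   to positive block matrices *)
Definition completely_positive (m : nat) (E : 'M[C]_m -> 'M[C]_m) : Prop :=
  forall (k : nat) (X : 'I_k -> 'I_k -> 'M[C]_m),
    psd (\mxblock_(i < k, j < k) X i j) ->
    psd (\mxblock_(i < k, j < k) E (X i j)).

Definition trace_preserving (m : nat) (E : 'M[C]_m -> 'M[C]_m) : Prop :=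
  forall X : 'M[C]_m, \tr (E X) = \tr X.

Definition channel (m : nat) (E : {linear 'M[C]_m -> 'M[C]_m}) : Prop :=
  completely_positive E /\ trace_preserving E.

Definition tt_covariant (m : nat) (a : 'I_m -> R) (E : 'M[C]_m -> 'M[C]_m)
  : Prop :=
  forall (t : R) (rho : 'M[C]_m), density rho ->
    E (evol a t *m rho *m adjmx (evol a t))
    = evol a t *m E rho *m adjmx (evol a t).

Definition Qmx (m : nat) (r s : 'M[C]_m) : 'M[C]_m :=
  \matrix_(x, y) (if x == y then Order.min 1 (s x x / r x x)
                  else s x y / r x y).

End QDefs.

From HB Require Import structures.
From mathcomp Require Import all_boot all_order all_algebra.
From mathcomp Require Import reals trigo.
From mathcomp.real_closed Require Import complex.
From mathcomp Require Import ring sesquilinear spectral.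
Set Implicit Arguments. Unset Strict Implicit. Unset Printing Implicit Defensive.
Import Order.TTheory GRing.Theory Num.Theory.
Local Open Scope ring_scope.
Local Open Scope complex_scope.

(* Covariance is assumed on states only, but extends by linearity and polarization to every
   matrix. As the phases exp(i (a_x - a_y) t) separate the Bohr frequencies, the (x, y) entry
   of E |p><q| can then be nonzero only if (p, q) = (x, y), or p = q and x = y. Hence
   s_xy = r_xy M_xy for x != y, where M_xy = <x| E |x><y| |y> is a compression of the Choi
   matrix of E, so M is psd; trace preservation and positivity give M_xx <= 1 and
   r_xx M_xx <= s_xx, i.e. M_xx <= q_xx, and Q = M + (nonnegative diagonal) is psd.
   Conversely, if Q is psd then E X = Q o X + (sum_x (1 - q_xx) X_xx / G) diag(g), with
   g_y = s_yy - q_yy r_yy and G = sum_y g_y, is a covariant channel mapping rho to sigma: its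
   Schur part has Kraus operators diag(b_l) for a factorization Q = B^* B with rows b_l, and
   its second part has Kraus operators sqrt(g_y (1 - q_xx) / G) |y><x|. *)

Lemma mul_delta_mx_delta (K : pzRingType) m n p q
    (i : 'I_m) (x : 'I_n) (y : 'I_p) (j : 'I_q) (A : 'M[K]_(n, p)) :
  delta_mx i x *m A *m delta_mx y j = A x y *: delta_mx i j.
Proof.
apply/matrixP => u v; rewrite mxE (bigD1 y) //= big1 => [|w /negbTE wy]; last first.
  by rewrite [delta_mx y j w v]mxE wy mulr0.
rewrite mxE (bigD1 x) //= big1 => [|z /negbTE zx]; last first.
  by rewrite [delta_mx i x u z]mxE zx andbF mul0r.
rewrite !mxE !eqxx !andbT !addr0.
by case: (u == i); case: (v == j); rewrite ?mul1r ?mul0r ?mulr1 ?mulr0.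
Qed.

Section ComplexMatrices.
Variable R : realType.
Local Notation C := R[i].

Lemma adjmxE p q (A : 'M[C]_(p, q)) i j : adjmx A i j = conjc (A j i).
Proof. by rewrite !mxE. Qed.

Lemma adjmxK p q (A : 'M[C]_(p, q)) : adjmx (adjmx A) = A.
Proof. by apply/matrixP => i j; rewrite !adjmxE conjcK. Qed.

Lemma adjmx_mul p q r (A : 'M[C]_(p, q)) (B : 'M[C]_(q, r)) :
  adjmx (A *m B) = adjmx B *m adjmx A.
Proof. by rewrite /adjmx map_mxM trmx_mul. Qed.

Lemma adjmxD p q (A B : 'M[C]_(p, q)) : adjmx (A + B) = adjmx A + adjmx B.
Proof. by rewrite /adjmx map_mxD linearD. Qed.

Lemma adjmxZ p q c (A : 'M[C]_(p, q)) : adjmx (c *: A) = conjc c *: adjmx A.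
Proof. by rewrite /adjmx map_mxZ linearZ. Qed.

Lemma adjmx_delta p q (i : 'I_p) (j : 'I_q) :
  adjmx (delta_mx i j : 'M[C]_(p, q)) = delta_mx j i.
Proof. by apply/matrixP => u v; rewrite !mxE conjc_nat andbC. Qed.

Lemma delta_mx_mul_adj p q (i : 'I_p) (j : 'I_q) :
  delta_mx i j = delta_mx i 0 *m adjmx (delta_mx j 0 : 'cV[C]_q).
Proof. by rewrite adjmx_delta mul_delta_mx. Qed.

Lemma adjmx_diag n (d : 'rV[C]_n) :
  adjmx (diag_mx d) = diag_mx (\row_i conjc (d 0 i)).
Proof.
apply/matrixP => i j; rewrite !mxE eq_sym.
by case: eqVneq => [->|_]; rewrite ?mulr0n ?conjc0.
Qed.

Lemma adjmx_mxdiag k n (K : 'I_k -> 'M[C]_n) :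
  adjmx (\mxdiag_(i < k) K i) = \mxdiag_(i < k) adjmx (K i).
Proof.
apply/matrixP => u v; rewrite !mxE.
case: (eqVneq (tagnat.sig1 v) (tagnat.sig1 u)) => [e|_].
  by rewrite e !conform_mx_id !mxE.
by rewrite !mxE conjc0.
Qed.

Lemma adjmx_mxcol k n p (u : 'I_k -> 'M[C]_(n, p)) :
  adjmx (\mxcol_(i < k) u i) = \mxrow_(i < k) adjmx (u i).
Proof. by apply/matrixP => a b; rewrite !mxE. Qed.

Lemma adjmx_mxrow k n p (u : 'I_k -> 'M[C]_(p, n)) :
  adjmx (\mxrow_(i < k) u i) = \mxcol_(i < k) adjmx (u i).
Proof. by apply/matrixP => a b; rewrite !mxE. Qed.

Lemma ge0_conjc (c : C) : 0 <= c -> conjc c = c.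
Proof. exact: geC0_conj. Qed.

Lemma psd0 n : psd (0 : 'M[C]_n).
Proof.
split; first by apply/matrixP => i j; rewrite !mxE conjc0.
by move=> v; rewrite mulmx0 mul0mx mxE.
Qed.

Lemma psdD n (A B : 'M[C]_n) : psd A -> psd B -> psd (A + B).
Proof.
move=> [hA qA] [hB qB]; split; first by rewrite adjmxD hA hB.
by move=> v; rewrite mulmxDr mulmxDl mxE addr_ge0.
Qed.

Lemma psd_sum n (I : finType) (F : I -> 'M[C]_n) :
  (forall l, psd (F l)) -> psd (\sum_l F l).
Proof. by move=> psdF; apply: big_ind => //; [exact: psd0 | exact: psdD]. Qed.

Lemma psdZ n (c : C) (A : 'M[C]_n) : 0 <= c -> psd A -> psd (c *: A).
Proof.
move=> c_ge0 [hA qA]; split; first by rewrite adjmxZ ge0_conjc ?hA.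
by move=> v; rewrite -scalemxAr -scalemxAl mxE mulr_ge0.
Qed.

Lemma psd_mulmx_adj n p (K : 'M[C]_(p, n)) (A : 'M[C]_n) :
  psd A -> psd (K *m A *m adjmx K).
Proof.
move=> [hA qA]; split; first by rewrite !adjmx_mul adjmxK hA mulmxA.
by move=> v; have := qA (adjmx K *m v); rewrite adjmx_mul adjmxK !mulmxA.
Qed.

Lemma psd_rank1 n (w : 'cV[C]_n) : psd (w *m adjmx w).
Proof.
split; first by rewrite adjmx_mul adjmxK.
move=> v; rewrite !mulmxA -mulmxA -{2}(adjmxK v) -adjmx_mul.
rewrite mxE big_ord1 adjmxE; exact: mulcJ_ge0.
Qed.

Lemma psd_diag_ge0 n (A : 'M[C]_n) i : psd A -> 0 <= A i i.
Proof.
move=> [_ /(_ (delta_mx i 0))]; rewrite adjmx_delta mul_delta_mx_delta.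
by rewrite !mxE eqxx mulr1.
Qed.

Lemma psd_diag_mx n (d : 'rV[C]_n) : (forall i, 0 <= d 0 i) -> psd (diag_mx d).
Proof.
move=> d_ge0; rewrite diag_mx_sum_delta; apply: psd_sum => i; apply: psdZ => //.
by rewrite delta_mx_mul_adj; apply: psd_rank1.
Qed.

Section Factorization.
Local Open Scope sesquilinear_scope.

Lemma adjmx_trmxC p q (A : 'M[C]_(p, q)) : adjmx A = A ^t*.
Proof. by rewrite /adjmx map_trmx. Qed.

Lemma psd_factor n (Q : 'M[C]_n) : psd Q -> exists B : 'M[C]_n, Q = adjmx B *m B.
Proof.
move=> [hQ qQ].
have /hermitian_normalmx/orthomx_spectralP : Q \is hermsymmx.
  by apply/is_hermitianmxP; rewrite expr0 scale1r -adjmx_trmxC hQ.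
set P := spectralmx Q; set d := spectral_diag Q.
have P_unitary : P \is unitarymx by exact: spectral_unitarymx.
rewrite invmx_unitary // -adjmx_trmxC => QE.
have d_ge0 l : 0 <= d 0 l.
  have := qQ (adjmx P *m delta_mx l 0).
  rewrite QE adjmx_mul adjmxK adjmx_delta !mulmxA adjmx_trmxC !mulmxtVK //.
  by rewrite mul_delta_mx_delta !mxE eqxx mulr1.
pose D := diag_mx (\row_l sqrtC (d 0 l)).
have D_real : adjmx D = D.
  rewrite adjmx_diag; congr diag_mx; apply/rowP => l.
  by rewrite !mxE ge0_conjc // sqrtC_ge0.
exists (D *m P); rewrite adjmx_mul D_real !mulmxA -(mulmxA _ D D) /D mulmx_diag {1}QE.
by congr (_ *m diag_mx _ *m _); apply/rowP => l; rewrite !mxE -expr2 sqrtCK.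
Qed.

End Factorization.

Lemma eq_completely_positive n (E1 E2 : 'M[C]_n -> 'M[C]_n) :
  E1 =1 E2 -> completely_positive E2 -> completely_positive E1.
Proof.
move=> eqE cpE2 k X psdX; rewrite (eq_mxblock (fun i j => eqE (X i j))).
exact: cpE2.
Qed.

Lemma cp_add n (E1 E2 : 'M[C]_n -> 'M[C]_n) :
  completely_positive E1 -> completely_positive E2 ->
  completely_positive (fun X => E1 X + E2 X).
Proof.
by move=> cp1 cp2 k X psdX; rewrite mxblockD; apply: psdD; [apply: cp1 | apply: cp2].
Qed.

Lemma cp_sum n (I : finType) (E_ : I -> 'M[C]_n -> 'M[C]_n) :
  (forall l, completely_positive (E_ l)) ->
  completely_positive (fun X => \sum_l E_ l X).
Proof. by move=> cpE k X psdX; rewrite mxblock_sum; apply: psd_sum => l; apply: cpE. Qed.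

Lemma cp_mulmx_adj n (K : 'M[C]_n) : completely_positive (fun X => K *m X *m adjmx K).
Proof.
move=> k X psdX; rewrite -(mul_mxblock_mxdiag _ (fun=> adjmx K)).
by rewrite -(mul_mxdiag_mxblock (fun=> K)) -adjmx_mxdiag; apply: psd_mulmx_adj.
Qed.

Lemma psd_mxblock_compress k n (B : 'I_k -> 'I_k -> 'M[C]_n) (f : 'I_k -> 'I_n) :
  psd (\mxblock_(i, j) B i j) -> psd (\matrix_(i, j) B i j (f i) (f j)).
Proof.
pose V := \mxrow_(j < k) (delta_mx j (f j) : 'M[C]_(k, n)).
move=> /(psd_mulmx_adj V); congr psd.
rewrite adjmx_mxrow mul_mxrow_mxblock mul_mxrow_mxcol (matrix_sum_delta (\matrix_(i, j) _)).
rewrite exchange_big; apply: eq_bigr => j _; rewrite mulmx_suml; apply: eq_bigr => i _.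
by rewrite adjmx_delta mul_delta_mx_delta mxE.
Qed.

Lemma cp_choi_psd n (E : 'M[C]_n -> 'M[C]_n) (f : 'I_n -> 'I_n) :
  completely_positive E -> psd (\matrix_(i, j) E (delta_mx i j) (f i) (f j)).
Proof.
move=> cpE; apply: (@psd_mxblock_compress _ _ (fun i j : 'I_n => E (delta_mx i j))).
apply: cpE.
pose v := \mxcol_(i < n) (delta_mx i 0 : 'cV[C]_n).
have -> : \mxblock_(i, j) (delta_mx i j : 'M[C]_n) = v *m adjmx v.
  rewrite adjmx_mxcol mul_mxcol_mxrow.
  by apply: eq_mxblock => i j; rewrite -delta_mx_mul_adj.
exact: psd_rank1.
Qed.

Lemma expiD (x y : R) : expi (x + y) = expi x * expi y.
Proof.
rewrite /expi cosD sinD; apply/eqP; rewrite eq_complex /= !eqxx /=.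
by rewrite addrC mulrC [sin y * _]mulrC.
Qed.

Lemma expiN (x : R) : expi (- x) = conjc (expi x).
Proof. by rewrite /expi cosN sinN. Qed.

Lemma expi0 : expi 0 = 1 :> C.
Proof. by rewrite /expi cos0 sin0. Qed.

Lemma expi_pi : expi pi = -1 :> C.
Proof. by rewrite /expi cospi sinpi; apply/eqP; rewrite eq_complex /= oppr0 !eqxx. Qed.

Lemma expi_neq0 (t : R) : expi t != 0.
Proof.
have := expiD t (- t); rewrite subrr expi0.
by move=> h; apply/eqP => e; move: h; rewrite e mul0r => /eqP; rewrite oner_eq0.
Qed.

Lemma expi_mul_eq0 (u v : R) (z : C) :
  u != v -> (forall t, expi (u * t) * z = expi (v * t) * z) -> z = 0.
Proof.
rewrite -subr_eq0 => uv_neq0 /(_ (pi / (u - v))).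
(* at t = pi / (u - v) the two phases are opposite *)
have -> : u * (pi / (u - v)) = v * (pi / (u - v)) + pi.
  apply: (addrI (- (v * (pi / (u - v))))).
  by rewrite addKr addrC -mulrBl mulrC divfK.
rewrite expiD expi_pi mulrN1 mulNr => /eqP; rewrite eq_sym -subr_eq0 opprK -mulr2n.
by rewrite mulrn_eq0 /= mulf_eq0 (negbTE (expi_neq0 _)) => /eqP.
Qed.

Lemma evol_conj_entry n (a : 'I_n -> R) t (X : 'M[C]_n) y w :
  (evol a t *m X *m adjmx (evol a t)) y w = expi ((a w - a y) * t) * X y w.
Proof.
rewrite /evol adjmx_diag mul_diag_mx mul_mx_diag !mxE -expiN opprK.
by rewrite mulrBl expiD mulrC mulrA.
Qed.

Section Covariance.
Variables (n : nat) (a : 'I_n -> R) (E : {linear 'M[C]_n -> 'M[C]_n}).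

Definition covariant_at (X : 'M[C]_n) := forall t,
  E (evol a t *m X *m adjmx (evol a t)) = evol a t *m E X *m adjmx (evol a t).

Lemma covariant_at0 : covariant_at 0.
Proof. by move=> t; rewrite mulmx0 mul0mx linear0 mulmx0 mul0mx. Qed.

Lemma covariant_atD X Y :
  covariant_at X -> covariant_at Y -> covariant_at (X + Y).
Proof.
by move=> covX covY t; rewrite mulmxDr mulmxDl !linearD /= covX covY mulmxDl.
Qed.

Lemma covariant_atZ c X : covariant_at X -> covariant_at (c *: X).
Proof.
by move=> covX t; rewrite -scalemxAr -scalemxAl !linearZ /= covX scalemxAl scalemxAr.
Qed.

Lemma covariant_at_rank1 (w : 'cV[C]_n) :
  tt_covariant a E -> covariant_at (w *m adjmx w).
Proof.
move=> covE; pose N := (adjmx w *m w) 0 0.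
have term_ge0 i : 0 <= adjmx w 0 i * w i 0.
  by rewrite adjmxE mulrC; exact: mulcJ_ge0.
have [N0 | N_neq0] := eqVneq N 0.
  suff -> : w = 0 by rewrite mul0mx; exact: covariant_at0.
  apply/matrixP => i j; rewrite ord1 mxE; apply/eqP; move: N0.
  rewrite /N mxE => /eqP; rewrite psumr_eq0 // => /allP /(_ i (mem_index_enum _)).
  by rewrite adjmxE mulf_eq0 conjc_eq0 orbb.
have N_ge0 : 0 <= N by rewrite /N mxE sumr_ge0.
(* w w^* is N times a density matrix *)
rewrite -[w *m _](scalerKV N_neq0); apply/covariant_atZ => t; apply: covE.
split; first by apply: psdZ; [rewrite invr_ge0 | exact: psd_rank1].
by rewrite mxtraceZ mxtrace_mulC /mxtrace big_ord1 mulVf.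
Qed.

Lemma covariant_atB X Y :
  covariant_at X -> covariant_at Y -> covariant_at (X - Y).
Proof. by move=> covX covY; rewrite -scaleN1r; apply/covariant_atD/covariant_atZ. Qed.

Lemma covariant_at_mul_adj (u v : 'cV[C]_n) :
  tt_covariant a E -> covariant_at (u *m adjmx v).
Proof.
move=> covE; pose W c := (u + c *: v) *m adjmx (u + c *: v).
have W_expand c : W c = u *m adjmx u + conjc c *: (u *m adjmx v)
    + (c *: (v *m adjmx u) + (c * conjc c) *: (v *m adjmx v)).
  by rewrite /W adjmxD adjmxZ mulmxDl !mulmxDr -!scalemxAl -!scalemxAr scalerA.
have conj_i : conjc 'i = - 'i :> C by apply/eqP; rewrite eq_complex /= oppr0 !eqxx.
have sqr_i : 'i * 'i = -1 :> C by rewrite -expr2 sqr_i.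
have polar : 2 *: (u *m adjmx v) = (W 1 - u *m adjmx u - v *m adjmx v)
    + 'i *: (W 'i - u *m adjmx u - v *m adjmx v).
  rewrite !W_expand conjc1 conj_i mulr1 mulrN sqr_i opprK !scale1r.
  move: (u *m adjmx v) (v *m adjmx u) (u *m adjmx u) (v *m adjmx v) => A B Pu Pv.
  apply/matrixP => x y; rewrite !mxE !(mulrDr, mulrBr, mulNr, mulrN, mulrA) sqr_i.
  ring.
have two_neq0 : (2 : C) != 0 by rewrite pnatr_eq0.
rewrite -[u *m _](scalerK two_neq0) polar.
have covW c : covariant_at (W c - u *m adjmx u - v *m adjmx v).
  by do ![apply: covariant_atB | apply: covariant_at_rank1].
by apply/covariant_atZ/covariant_atD; last apply: covariant_atZ.
Qed.

Lemma tt_covariant_at X : tt_covariant a E -> covariant_at X.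
Proof.
move=> covE; rewrite (matrix_sum_delta X).
apply: big_ind => [|Y Z|p _]; [exact: covariant_at0 | exact: covariant_atD |].
apply: big_ind => [|Y Z|q _]; [exact: covariant_at0 | exact: covariant_atD |].
by apply: covariant_atZ; rewrite delta_mx_mul_adj; apply: covariant_at_mul_adj.
Qed.

Lemma covariant_delta_entry_eq0 p q x y :
  tt_covariant a E -> a p - a q != a x - a y -> E (delta_mx p q) x y = 0.
Proof.
move=> /(tt_covariant_at (delta_mx p q)) covE freq_neq.
apply: (@expi_mul_eq0 (a q - a p) (a y - a x)).
  by rewrite -(inj_eq (@oppr_inj _)) !opprB.
move=> t; have /matrixP/(_ x y) := covE t; rewrite evol_conj_entry => <-.
have -> : evol a t *m delta_mx p q *m adjmx (evol a t)
    = expi ((a q - a p) * t) *: delta_mx p q.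
  apply/matrixP => i j; rewrite evol_conj_entry !mxE.
  by case: (eqVneq i p) => [->|]; case: (eqVneq j q) => [->|]; rewrite ?andbF ?mulr0.
by rewrite linearZ mxE.
Qed.

End Covariance.

Lemma linear_mx_entry n (E : {linear 'M[C]_n -> 'M[C]_n}) X x y :
  E X x y = \sum_p \sum_q X p q * E (delta_mx p q) x y.
Proof.
rewrite {1}(matrix_sum_delta X) linear_sum summxE; apply: eq_bigr => p _.
by rewrite linear_sum summxE; apply: eq_bigr => q _; rewrite linearZ mxE.
Qed.

Lemma nondeg_covariant_entry n (a : 'I_n -> R) (E : {linear 'M[C]_n -> 'M[C]_n})
    X x y :
  nondeg_bohr a -> tt_covariant a E ->
  E X x y = if x == y then \sum_p X p p * E (delta_mx p p) x x
            else X x y * E (delta_mx x y) x y.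
Proof.
move=> nd covE; have vanish p q : ~ ((p = x /\ q = y) \/ (p = q /\ x = y)) ->
    X p q * E (delta_mx p q) x y = 0.
  by move=> not_res; rewrite (covariant_delta_entry_eq0 covE) ?mulr0 //; apply/eqP => /nd.
rewrite linear_mx_entry; case: eqVneq => [xy|xy]; first subst y.
  apply: eq_bigr => p _; rewrite (bigD1 p) //= big1 ?addr0 // => q qp.
  by apply: vanish => -[[? ?]|[? _]]; subst; rewrite eqxx in qp.
rewrite (bigD1 x) //= (bigD1 y) //= big1 ?addr0 => [|q qy]; last first.
  by apply: vanish => -[[_ ?]|[_ ?]]; subst; rewrite eqxx in qy xy.
rewrite big1 ?addr0 // => p px; apply: big1 => q _; apply: vanish.
by move=> -[[? _]|[_ ?]]; subst; rewrite eqxx in px xy.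
Qed.

Lemma Qmx_psd_of_channel n (a : 'I_n -> R) (r s : 'M[C]_n)
    (E : {linear 'M[C]_n -> 'M[C]_n}) :
  nondeg_bohr a -> density r -> (forall x y, r x y != 0) ->
  channel E -> tt_covariant a E -> E r = s -> psd (Qmx r s).
Proof.
move=> nd [psd_r _] r_neq0 [cpE tpE] covE <-.
pose M := \matrix_(x, y) E (delta_mx x y) x y.
have E_ge0 p x : 0 <= E (delta_mx p p) x x.
  by have := psd_diag_ge0 p (cp_choi_psd (fun=> x) cpE); rewrite mxE.
have r_gt0 x : 0 < r x x by rewrite lt_def r_neq0 psd_diag_ge0.
have E_le1 x : E (delta_mx x x) x x <= 1.
  have <- : \tr (E (delta_mx x x)) = 1.
    rewrite tpE delta_mx_mul_adj mxtrace_mulC adjmx_delta mul_delta_mx.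
    by rewrite /mxtrace big_ord1 mxE.
  by rewrite /mxtrace (bigD1 x) //= lerDl sumr_ge0.
have E_le_ratio x : E (delta_mx x x) x x <= E r x x / r x x.
  rewrite ler_pdivlMr // (nondeg_covariant_entry r x x nd covE) eqxx (bigD1 x) //=.
  rewrite mulrC lerDl.
  by apply: sumr_ge0 => p _; apply: mulr_ge0; [exact: psd_diag_ge0 | exact: E_ge0].
suff -> : Qmx r (E r) = M + diag_mx (\row_x (Qmx r (E r) x x - M x x)).
  apply: psdD; first exact: (cp_choi_psd id cpE).
  apply: psd_diag_mx => x; rewrite !mxE eqxx subr_ge0 /Order.min.
  by case: ifP => _; [exact: E_le1 | exact: E_le_ratio].
apply/matrixP => x y; rewrite !mxE; case: eqVneq => [<-|xy].
  by rewrite eqxx mulr1n addrC subrK.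
rewrite mulr0n addr0 (nondeg_covariant_entry r x y nd covE) (negbTE xy).
by rewrite mulrAC divff ?mul1r.
Qed.

End ComplexMatrices.

Definition covariant_map (R : realType) n (Q : 'M[R[i]]_n) (c g : 'I_n -> R[i])
    (G : R[i]) (X : 'M[R[i]]_n) : 'M[R[i]]_n :=
  \matrix_(y, w) (Q y w * X y w) + ((\sum_x c x * X x x) / G) *: diag_mx (\row_y g y).

Fact covariant_map_is_linear (R : realType) n (Q : 'M[R[i]]_n) c g G :
  linear (covariant_map Q c g G).
Proof.
move=> k X Y; apply/matrixP => y w; rewrite /covariant_map !mxE.
have -> : \sum_x c x * (k *: X + Y) x x = k * \sum_x c x * X x x + \sum_x c x * Y x x.
  by rewrite mulr_sumr -big_split; apply: eq_bigr => x _; rewrite /= !mxE; ring.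
ring.
Qed.

HB.instance Definition _ (R : realType) n (Q : 'M[R[i]]_n) c g G :=
  GRing.isLinear.Build R[i] 'M[R[i]]_n 'M[R[i]]_n *:%R (covariant_map Q c g G)
    (covariant_map_is_linear Q c g G).

Section CovariantMap.
Variables (R : realType) (n : nat).
Local Notation C := R[i].
Variables (Q : 'M[C]_n) (c g : 'I_n -> C) (G : C).

Lemma cp_schur : psd Q -> completely_positive (fun X => \matrix_(y, w) (Q y w * X y w)).
Proof.
move=> /psd_factor[B QE].
pose K l := diag_mx (\row_z conjc (B l z)).
apply: (eq_completely_positive (E2 := fun X => \sum_l K l *m X *m adjmx (K l))).
  move=> X; apply/matrixP => y w; rewrite QE !mxE summxE mulr_suml; apply: eq_bigr => l _.
  by rewrite adjmx_diag mul_diag_mx mul_mx_diag !mxE conjcK; ring.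
by apply: cp_sum => l; apply: cp_mulmx_adj.
Qed.

Lemma cp_reset : (forall x, 0 <= c x) -> (forall y, 0 <= g y) -> 0 <= G ->
  completely_positive (fun X => ((\sum_x c x * X x x) / G) *: diag_mx (\row_y g y)).
Proof.
move=> c_ge0 g_ge0 G_ge0.
pose K y x := sqrtC (g y * c x / G) *: (delta_mx y x : 'M[C]_n).
have K_conj y x X : K y x *m X *m adjmx (K y x) = (g y * c x / G * X x x) *: delta_mx y y.
  rewrite adjmxZ adjmx_delta -scalemxAl -!scalemxAr -scalemxAl mul_delta_mx_delta !scalerA.
  have t_ge0 : 0 <= g y * c x / G by rewrite divr_ge0 ?mulr_ge0.
  by rewrite ge0_conjc ?sqrtC_ge0 // -expr2 sqrtCK.
apply: (eq_completely_positive (E2 := fun X => \sum_y \sum_x K y x *m X *m adjmx (K y x))).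
  move=> X; rewrite diag_mx_sum_delta scaler_sumr; apply: eq_bigr => y _.
  under [RHS]eq_bigr do rewrite K_conj.
  rewrite -scaler_suml scalerA mxE !mulr_suml; congr (_ *: _); apply: eq_bigr => x _.
  ring.
by apply: cp_sum => y; apply: cp_sum => x; apply: cp_mulmx_adj.
Qed.

Lemma covariant_map_cp : psd Q -> (forall x, 0 <= c x) -> (forall y, 0 <= g y) ->
  0 <= G -> completely_positive (covariant_map Q c g G).
Proof.
by move=> psdQ c_ge0 g_ge0 G_ge0; apply: cp_add; [apply: cp_schur | apply: cp_reset].
Qed.

Lemma covariant_map_covariant (a : 'I_n -> R) t X :
  covariant_map Q c g G (evol a t *m X *m adjmx (evol a t))
  = evol a t *m covariant_map Q c g G X *m adjmx (evol a t).
Proof.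
apply/matrixP => y w; rewrite !(evol_conj_entry, mxE).
under eq_bigr do rewrite evol_conj_entry subrr mul0r expi0 mul1r.
by case: eqVneq => [<-|_]; rewrite ?subrr ?mul0r ?expi0 ?mulr0n ?mulr0 ?addr0; ring.
Qed.

End CovariantMap.

Section Construction.
Variables (R : realType) (n : nat) (r s : 'M[R[i]]_n).
Hypotheses (density_r : density r) (density_s : density s)
  (r_neq0 : forall x y, r x y != 0).

Let q x := Qmx r s x x.
Let c x := 1 - q x.
Let g x := s x x - q x * r x x.
Let G := \sum_x g x.

Let r_gt0 x : 0 < r x x.
Proof. by rewrite lt_def r_neq0 psd_diag_ge0 //; case: density_r. Qed.

Let c_g_ge0 x : 0 <= c x /\ 0 <= g x.
Proof.
have s_ge0 : 0 <= s x x by apply: psd_diag_ge0; case: density_s.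
have ratio_real : s x x / r x x \is Num.real by apply: ger0_real; rewrite divr_ge0 // ltW.
rewrite /c /g /q mxE eqxx /Order.min; case: ifP => [lt1 | /negbT].
  rewrite subrr mul1r subr_ge0; split => //.
  by move: lt1; rewrite ltr_pdivlMr // mul1r => /ltW.
rewrite -real_leNgt ?real1 // => le1.
by rewrite divfK ?subrr ?subr_ge0 // lt0r_neq0.
Qed.

Let c_ge0 x : 0 <= c x. Proof. by case: (c_g_ge0 x). Qed.
Let g_ge0 x : 0 <= g x. Proof. by case: (c_g_ge0 x). Qed.

Let G_eq : G = \sum_x c x * r x x.
Proof.
have trace1 (A : 'M[R[i]]_n) : density A -> \sum_x A x x = 1 by case.
rewrite /G /g /c sumrB (trace1 s) //.
under [RHS]eq_bigr do rewrite mulrBl mul1r.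
by rewrite sumrB (trace1 r).
Qed.

(* If G = 0, the second part of the channel is 0 because x / 0 = 0; this is harmless,
   since then every c x and g x vanishes. *)
Let G_eq0 : G = 0 -> forall x, c x = 0 /\ g x = 0.
Proof.
move=> G0 x; split; last exact: (psumr_eq0P (fun y _ => g_ge0 y) G0).
have cr_ge0 y : 0 <= c y * r y y by apply: mulr_ge0 (ltW (r_gt0 y)).
rewrite G_eq in G0; have /eqP := psumr_eq0P (fun y _ => cr_ge0 y) G0 (i := x) isT.
by rewrite mulf_eq0 (negbTE (r_neq0 x x)) orbF => /eqP.
Qed.

Let reset_cancel S : (G = 0 -> S = 0) -> S / G * G = S.
Proof.
move=> S0; have [G0|G_neq0] := eqVneq G 0; first by rewrite S0 // !mul0r.
by rewrite divfK.
Qed.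

Lemma covariant_channel_of_Qmx_psd (a : 'I_n -> R) : psd (Qmx r s) ->
  exists E : {linear 'M[R[i]]_n -> 'M[R[i]]_n},
    channel E /\ tt_covariant a E /\ E r = s.
Proof.
move=> psdQ; exists (covariant_map (Qmx r s) c g G); split; [split | split].
- by apply: covariant_map_cp => //; apply: sumr_ge0.
- move=> X; rewrite /covariant_map mxtraceD mxtraceZ mxtrace_diag /mxtrace.
  under [X in _ * X]eq_bigr do rewrite mxE.
  rewrite reset_cancel => [|G0]; last by apply: big1 => x _; rewrite (G_eq0 G0 x).1 mul0r.
  by rewrite -big_split; apply: eq_bigr => x _; rewrite mxE /c /q /=; ring.
- by move=> t X _; apply: covariant_map_covariant.
- apply/matrixP => y w; rewrite !mxE -G_eq; case: eqVneq => [<-|yw]; last first.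
    by rewrite mulr0n mulr0 addr0 divfK.
  have -> : G / G * (g y *+ 1) = g y.
    by have [/G_eq0/(_ y)[_ ->]|G_neq0] := eqVneq G 0; rewrite ?mulr0 // divff ?mul1r.
  by rewrite /g /q mxE eqxx addrC subrK.
Qed.

End Construction.

Theorem theorem3 (R : realType) (m : nat) (a : 'I_m -> R)
    (rho sigma : 'M[R[i]]_m) :
  nondeg_bohr a ->
  density rho -> density sigma ->
  (forall x x' : 'I_m, rho x x' != 0) ->
  (exists E : {linear 'M[R[i]]_m -> 'M[R[i]]_m},
      channel E /\ tt_covariant a E /\ E rho = sigma)
  <-> psd (Qmx rho sigma).
Proof.
move=> nd density_rho density_sigma rho_neq0; split.
  move=> [E [chE [covE E_rho]]].
  exact: Qmx_psd_of_channel nd density_rho rho_neq0 chE covE E_rho.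
exact: covariant_channel_of_Qmx_psd.
Qed.
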